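(* Let $K\ge2$ and let $C_1,\dots,C_{K-1}>0$. Let $\Phi$ be the cumulative distribution function of the standard normal distribution. Then the function $f:\mathbb{R}^K\to\mathbb{R}$, $f(\vec{x})=\sum_{i=1}^{K-1}\Phi(C_ix_i-C_ix_K)$, is convex on the domain $D=\{\vec{x}\in\mathbb{R}^K: x_i-x_K\le 0\ \forall i<K\}$. *)

From HB Require Import structures.
From mathcomp Require Import all_boot all_order all_algebra.
From mathcomp Require Import all_classical all_reals all_analysis.
Set Implicit Arguments. Unset Strict Implicit. Unset Printing Implicit Defensive.
Import Order.TTheory GRing.Theory Num.Theory.
Local Open Scope classical_set_scope.
Local Open Scope ring_scope.

Definition Phi {R : realType} (t : R) : R :=
  fine (normal_prob 0 1 `]-oo, t]).

(* Last index K-1 (0-based) of 'I_K, i.e. the paper's index K. *)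
Definition ordlast (K : nat) (hK : (0 < K)%N) : 'I_K :=
  Ordinal (etrans (ltn_predL K) hK).

(* The paper's indices i = 1..K-1 are the 0-based i : 'I_K.-1, embedded in 'I_K. *)
Definition idx (K : nat) (i : 'I_K.-1) : 'I_K := widen_ord (leq_pred K) i.

Definition fPhi {R : realType} (K : nat) (hK : (0 < K)%N) (C : 'I_K.-1 -> R)
  (x : 'rV[R]_K) : R :=
  \sum_(i < K.-1) Phi (C i * x 0 (idx i) - C i * x 0 (ordlast hK)).

Definition Dom {R : realType} (K : nat) (hK : (0 < K)%N) : set 'rV[R]_K :=
  [set x | forall i : 'I_K.-1, x 0 (idx i) - x 0 (ordlast hK) <= 0].

From HB Require Import structures.
From mathcomp Require Import all_boot all_order all_algebra.
From mathcomp Require Import all_classical all_reals all_analysis.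
From mathcomp Require Import ring lra.
Import Order.TTheory GRing.Theory Num.Theory.
Local Open Scope classical_set_scope.
Local Open Scope ring_scope.
Set Implicit Arguments.
Unset Strict Implicit.

(* Each summand of f is Phi composed with the linear form
   x |-> C_i (x_i - x_K), which maps D into ]-oo, 0], so it suffices that Phi
   is convex on ]-oo, 0].  There the Gaussian density phi is nondecreasing:
   for a <= c := t a + (1 - t) b <= b <= 0 this gives
   Phi c - Phi a <= phi c (c - a) and phi c (b - c) <= Phi b - Phi c, and
   t (c - a) = (1 - t) (b - c) balances the two slopes. *)

Section convex_function_closure.
Context {R : realType} {E : lmodType R}.
Local Open Scope convex_scope.

Lemma convex_function_sum (I : Type) (r : seq I) (P : pred I)
    (D : set (convex_lmodType E)) (f : I -> convex_lmodType E -> R^o) :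
  (forall i, P i -> convex_function D (f i)) ->
  convex_function D (fun x => \sum_(i <- r | P i) f i x).
Proof.
move=> f_cvx t x y xD yD; rewrite convRE !mulr_sumr -big_split /=.
by apply: ler_sum => i Pi; exact: f_cvx.
Qed.

Lemma convex_function_comp_scalar (D : set (convex_lmodType E)) (D' : set R^o)
    (f : R^o -> R^o) (g : E -> R) :
  scalar g -> (forall x, D x -> D' (g x)) -> convex_function D' f ->
  convex_function D (f \o g).
Proof.
move=> g_scalar g_D f_cvx t x y /set_mem xD /set_mem yD /=.
have [gZ gD] := GRing.semilinear_linear g_scalar.
have -> : g (x <| t |> y) = (g x : R^o) <| t |> g y by rewrite convRE /= gD !gZ.
by apply: f_cvx; rewrite inE; exact: g_D.
Qed.
End convex_function_closure.

Section integral_monotone_density.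
Context {R : realType}.
Local Notation mu := (@lebesgue_measure R).
Variable f : R -> R.
Hypotheses (mf : measurable_fun setT f) (f_ge0 : forall x, 0 <= f x).

Lemma integral_itv_oc_le_right (a c : R) : a <= c ->
  {in `]a, c], forall x, f x <= f c} ->
  (\int[mu]_(x in `]a, c]) (f x)%:E <= (f c * (c - a))%:E)%E.
Proof.
move=> ac fc.
apply: (@le_trans _ _ (\int[mu]_(x in `]a, c]) cst (f c)%:E x)%E).
  apply: ge0_le_integral => //.
  - by move=> x _; rewrite lee_fin.
  - exact/measurable_realfun.measurable_EFinP/measurable_funTS.
rewrite integral_cst // [X in (_ * X)%E]lebesgue_measure_itv /= lte_fin.
by case: ltgtP ac => // -> _; rewrite subrr mulr0 mule0.
Qed.

Lemma integral_itv_oc_ge_left (c b : R) : c <= b ->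
  {in `]c, b], forall x, f c <= f x} ->
  ((f c * (b - c))%:E <= \int[mu]_(x in `]c, b]) (f x)%:E)%E.
Proof.
move=> cb fc.
apply: (@le_trans _ _ (\int[mu]_(x in `]c, b]) cst (f c)%:E x)%E); last first.
  apply: ge0_le_integral => //.
  - by move=> x _; rewrite lee_fin.
  - exact/measurable_realfun.measurable_EFinP/measurable_funTS.
rewrite integral_cst // [X in (_ * X)%E]lebesgue_measure_itv /= lte_fin.
by case: ltgtP cb => // -> _; rewrite subrr mulr0 mule0.
Qed.

End integral_monotone_density.

Lemma le_normal_pdf_below_mean {R : realType} (m s x y : R) :
  s != 0 -> x <= y -> y <= m -> normal_pdf m s x <= normal_pdf m s y.
Proof.
move=> s0 xy ym; rewrite normal_pdfE //.
rewrite ler_pM2l ?normal_peak_gt0 // /normal_fun ler_expR !mulNr lerN2.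
rewrite ler_pM2r ?invr_gt0 ?pmulrn_lgt0 ?exprn_even_gt0 //.
have -> : (x - m) ^+ 2 = (y - m) ^+ 2 + (y - x) * ((m - x) + (m - y)) by ring.
by rewrite lerDl; apply: mulr_ge0; lra.
Qed.

Section Phi_convex.
Context {R : realType}.
Local Notation P := (@normal_prob R 0 1).
Local Notation phi := (@normal_pdf R 0 1).

Lemma Phi_increment (a c : R) : a <= c -> Phi c - Phi a = fine (P `]a, c]).
Proof.
move=> ac; rewrite /Phi (@itv_bndbnd_setU _ _ _ (BRight a)) ?bnd_simp //.
rewrite measureU //; last first.
  apply/eqP/(@lt_disjoint _ `]-oo, a] `]a, c]) => x y.
  by rewrite !in_itv /= => xa /andP[ay _]; exact: le_lt_trans ay.
by rewrite fineD ?fin_num_measure // addrC addKr.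
Qed.

Lemma Phi_increment_le (a c : R) : a <= c -> c <= 0 ->
  Phi c - Phi a <= phi c * (c - a).
Proof.
move=> ac c0; rewrite Phi_increment // -lee_fin fineK ?fin_num_measure //.
apply: integral_itv_oc_le_right => //.
- exact: measurable_normal_pdf.
- exact: normal_pdf_ge0.
- move=> x; rewrite in_itv /= => /andP[_ xc].
  exact: le_normal_pdf_below_mean.
Qed.

Lemma Phi_increment_ge (c b : R) : c <= b -> b <= 0 ->
  phi c * (b - c) <= Phi b - Phi c.
Proof.
move=> cb b0; rewrite Phi_increment // -lee_fin fineK ?fin_num_measure //.
apply: integral_itv_oc_ge_left => //.
- exact: measurable_normal_pdf.
- exact: normal_pdf_ge0.
- move=> x; rewrite in_itv /= => /andP[cx xb].
  exact: le_normal_pdf_below_mean (ltW cx) (le_trans xb b0).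
Qed.

Local Open Scope convex_scope.

Lemma convex_Phi_le0 : convex_function (E := R^o) [set x | x <= 0] Phi.
Proof.
move=> t a b /set_mem a0 /set_mem b0.
wlog ab : a b t a0 b0 / a <= b.
  move=> wlog_ab; have [|/ltW ba] := leP a b; first exact: wlog_ab.
  by rewrite convC [X in _ <= X]convC; exact: wlog_ab.
have -> : a <| t |> b = t%:num * a + (1 - t%:num) * b :> R by [].
set c := t%:num * a + (1 - t%:num) * b.
have /andP[ac cb] : a <= c <= b := convR_itv t ab.
have t0 : 0 <= t%:num by [].
have t1 : 0 <= 1 - t%:num by rewrite subr_ge0.
have left_slope := ler_wpM2l t0 (Phi_increment_le ac (le_trans cb b0)).
have right_slope := ler_wpM2l t1 (Phi_increment_ge cb b0).
have balance : t%:num * (phi c * (c - a)) = (1 - t%:num) * (phi c * (b - c)).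
  by rewrite {2 4}/c; ring.
rewrite convRE /unstable.onem; lra.
Qed.
End Phi_convex.

Theorem lemma2 (R : realType) (K : nat) (hK : (2 <= K)%N) (C : 'I_K.-1 -> R)
  (hC : forall i, 0 < C i) :
  convex_function (E := 'rV[R]_K) (Dom (ltnW hK)) (fPhi (ltnW hK) C).
Proof.
apply: convex_function_sum => i _.
pose gap (x : 'rV[R]_K) : R :=
  C i * x 0 (idx i) - C i * x 0 (ordlast (ltnW hK)).
apply: (convex_function_comp_scalar (g := gap) _ _ convex_Phi_le0).
- by move=> a x y; rewrite /gap !mxE; ring.
- by move=> x xD; rewrite /= /gap -mulrBr pmulr_rle0 //; exact: xD.
Qed.
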